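(* Let $X$, $X_m$, $P_m$, $J_m$ satisfy the approximation properties in the context. Let $B$ generate a strongly continuous semigroup $(S(t))_{t\ge0}$ on $X$ and let $B_m$ generate strongly continuous semigroups $(S_m(t))_{t\ge0}$ on $X_m$, with constants $M_S\ge1$, $\omega_S\in\mathbb{R}$ such that $\|S(h)\|\le M_Se^{\omega_Sh}$ and $\|S_m(h)\|\le M_Se^{\omega_Sh}$ for all $h>0$, $m\in\mathbb{N}$, and assume $\lim_{m\to\infty}J_mB_mP_mx=Bx$ for all $x\in D(B)$. Fix $t_0>0$. Then for all $t\in(0,t_0]$, $$\lim_{n,m\to\infty}\frac{J_mS_m(t/n)P_mx-J_mP_mx}{t/n}=Bx\quad\text{for all }x\in D(B),$$ where the limit as $m\to\infty$ is uniform in $n\in\mathbb{N}$.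
   Context: Approximation properties: $X_m$ ($m\in\mathbb{N}$) are Banach spaces and $P_m:X\to X_m$, $J_m:X_m\to X$ are bounded linear operators such that (i) $P_mJ_m=I_m$ (the identity on $X_m$) for all $m$; (ii) $\lim_{m\to\infty}J_mP_mx=x$ for all $x\in X$; (iii) $\|J_m\|\le M_J$, $\|P_m\|\le M_P$ for all $m$, for some constants $M_J,M_P>0$. A double limit $\lim_{n,m\to\infty}a_{n,m}=a$ means: for every $\varepsilon>0$ there is $N$ with $\|a_{n,m}-a\|\le\varepsilon$ for all $n,m\ge N$. *)

From Stdlib Require Import Reals Lra.
Open Scope R_scope.

Record NormedSpace := {
  car :> Type;
  vzero : car;
  vadd : car -> car -> car;
  vopp : car -> car;
  vscal : R -> car -> car;
  vnorm : car -> R;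
  vadd_assoc : forall x y z, vadd x (vadd y z) = vadd (vadd x y) z;
  vadd_comm : forall x y, vadd x y = vadd y x;
  vadd_zero : forall x, vadd x vzero = x;
  vadd_opp : forall x, vadd x (vopp x) = vzero;
  vscal_one : forall x, vscal 1 x = x;
  vscal_assoc : forall a b x, vscal a (vscal b x) = vscal (a * b) x;
  vscal_distr_v : forall a x y, vscal a (vadd x y) = vadd (vscal a x) (vscal a y);
  vscal_distr_s : forall a b x, vscal (a + b) x = vadd (vscal a x) (vscal b x);
  vnorm_eq0 : forall x, vnorm x = 0 -> x = vzero;
  vnorm_triangle : forall x y, vnorm (vadd x y) <= vnorm x + vnorm y;
  vnorm_scal : forall a x, vnorm (vscal a x) = Rabs a * vnorm x
}.

Arguments vzero {_}.
Arguments vadd {_} _ _.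
Arguments vopp {_} _.
Arguments vscal {_} _ _.
Arguments vnorm {_} _.

Definition vsub {V : NormedSpace} (x y : V) : V := vadd x (vopp y).

Definition seq_lim {V : NormedSpace} (u : nat -> V) (l : V) : Prop :=
  forall eps, 0 < eps -> exists N : nat, forall n, (N <= n)%nat ->
    vnorm (vsub (u n) l) <= eps.

Definition complete (V : NormedSpace) : Prop :=
  forall u : nat -> V,
    (forall eps, 0 < eps -> exists N : nat, forall n k, (N <= n)%nat -> (N <= k)%nat ->
       vnorm (vsub (u n) (u k)) <= eps) ->
    exists l, seq_lim u l.

Definition is_linear {V W : NormedSpace} (f : V -> W) : Prop :=
  (forall x y, f (vadd x y) = vadd (f x) (f y)) /\
  (forall a x, f (vscal a x) = vscal a (f x)).

Definition bounded_linear {V W : NormedSpace} (f : V -> W) : Prop :=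
  is_linear f /\ exists C, forall x, vnorm (f x) <= C * vnorm x.

Definition opnorm_le {V W : NormedSpace} (f : V -> W) (M : R) : Prop :=
  forall x, vnorm (f x) <= M * vnorm x.

Definition lim_0plus {V : NormedSpace} (f : R -> V) (l : V) : Prop :=
  forall eps, 0 < eps -> exists delta, 0 < delta /\
    forall h, 0 < h < delta -> vnorm (vsub (f h) l) <= eps.

Definition C0_semigroup {V : NormedSpace} (S : R -> V -> V) : Prop :=
  (forall t, 0 <= t -> bounded_linear (S t)) /\
  (forall x, S 0 x = x) /\
  (forall t s x, 0 <= t -> 0 <= s -> S (t + s) x = S t (S s x)) /\
  (forall x, lim_0plus (fun t => S t x) x).

Definition generator {V : NormedSpace} (S : R -> V -> V)
    (D : V -> Prop) (B : V -> V) : Prop :=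
  (forall x, D x <-> exists y, lim_0plus (fun h => vscal (/ h) (vsub (S h x) x)) y) /\
  (forall x, D x -> lim_0plus (fun h => vscal (/ h) (vsub (S h x) x)) (B x)).

Definition generates {V : NormedSpace} (D : V -> Prop) (B : V -> V)
    (S : R -> V -> V) : Prop :=
  C0_semigroup S /\ generator S D B.

From Stdlib Require Import Reals Lra Lia List.
Open Scope R_scope.

Section VectorAlgebra.
Variable V : NormedSpace.
Implicit Types x y z : V.

Lemma vadd_zero_l x : vadd vzero x = x.
Proof. rewrite vadd_comm; apply vadd_zero. Qed.

Lemma vopp_unique x y : vadd x y = vzero -> y = vopp x.
Proof.
  intro H. rewrite <- (vadd_zero _ y), <- (vadd_opp _ x), vadd_assoc.
  rewrite (vadd_comm _ y x), H. apply vadd_zero_l.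
Qed.

Lemma vscal_zero_l x : vscal 0 x = vzero.
Proof.
  assert (H : vscal 0 x = vadd (vscal 0 x) (vscal 0 x)).
  { rewrite <- vscal_distr_s. f_equal. ring. }
  assert (H2 : vadd (vscal 0 x) (vopp (vscal 0 x)) = vzero) by apply vadd_opp.
  rewrite H in H2 at 1. rewrite <- vadd_assoc, vadd_opp, vadd_zero in H2. exact H2.
Qed.

Lemma vopp_scal x : vopp x = vscal (-1) x.
Proof.
  symmetry. apply vopp_unique.
  rewrite <- (vscal_one _ x) at 1. rewrite <- vscal_distr_s.
  replace (1 + -1) with 0 by ring. apply vscal_zero_l.
Qed.

Lemma vscal_zero_r a : vscal a (@vzero V) = vzero.
Proof. rewrite <- (vscal_zero_l vzero), vscal_assoc, Rmult_0_r. reflexivity. Qed.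

Lemma vnorm_zero : vnorm (@vzero V) = 0.
Proof. rewrite <- (vscal_zero_l vzero), vnorm_scal, Rabs_R0. ring. Qed.

Lemma vnorm_opp x : vnorm (vopp x) = vnorm x.
Proof.
  rewrite vopp_scal, vnorm_scal, Rabs_left by lra. ring.
Qed.

Lemma vnorm_nonneg x : 0 <= vnorm x.
Proof.
  assert (H := vnorm_triangle _ x (vopp x)).
  rewrite vadd_opp, vnorm_zero, vnorm_opp in H. lra.
Qed.

Lemma vnorm_sub_eq0 x y : vnorm (vsub x y) = 0 -> x = y.
Proof.
  intro H. apply vnorm_eq0, vopp_unique in H.
  assert (Hinv : forall u : V, vopp (vopp u) = u).
  { intro u. rewrite !vopp_scal, vscal_assoc. replace (-1 * -1) with 1 by ring.
    apply vscal_one. }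
  rewrite <- (Hinv x), <- H, Hinv. reflexivity.
Qed.

(** Reflective normalisation of linear combinations: a formal expression
    over a list of atoms evaluates to the linear combination of the atoms
    with its coefficient vector, so two expressions are equal as soon as
    their coefficients agree as real numbers. *)
Inductive vexpr :=
  | Atom (n : nat) | Zero | Add (a b : vexpr) | Opp (a : vexpr)
  | Scal (r : R) (a : vexpr) | Sub (a b : vexpr).

Fixpoint vexpr_eval (env : list V) (e : vexpr) : V :=
  match e with
  | Atom n => nth n env vzero
  | Zero => vzero
  | Add a b => vadd (vexpr_eval env a) (vexpr_eval env b)
  | Opp a => vopp (vexpr_eval env a)
  | Scal r a => vscal r (vexpr_eval env a)
  | Sub a b => vsub (vexpr_eval env a) (vexpr_eval env b)
  end.

Fixpoint vexpr_coeff (e : vexpr) : nat -> R :=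
  match e with
  | Atom n => fun j => if Nat.eqb n j then 1 else 0
  | Zero => fun _ => 0
  | Add a b => fun j => vexpr_coeff a j + vexpr_coeff b j
  | Opp a => fun j => - vexpr_coeff a j
  | Scal r a => fun j => r * vexpr_coeff a j
  | Sub a b => fun j => vexpr_coeff a j - vexpr_coeff b j
  end.

Fixpoint lincomb (env : list V) (c : nat -> R) : V :=
  match env with
  | nil => vzero
  | v :: env' => vadd (vscal (c O) v) (lincomb env' (fun j => c (S j)))
  end.

Lemma lincomb_ext env : forall c1 c2,
  (forall j, c1 j = c2 j) -> lincomb env c1 = lincomb env c2.
Proof.
  induction env as [|v env IH]; intros c1 c2 H; simpl; auto.
  rewrite H. f_equal. apply IH. intro; apply H.
Qed.

Lemma lincomb_add env : forall c1 c2,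
  lincomb env (fun j => c1 j + c2 j) = vadd (lincomb env c1) (lincomb env c2).
Proof.
  induction env as [|v env IH]; intros; simpl.
  - rewrite vadd_zero; auto.
  - rewrite vscal_distr_s, IH.
    rewrite <- !vadd_assoc. f_equal. rewrite !vadd_assoc. f_equal. apply vadd_comm.
Qed.

Lemma lincomb_scal env : forall r c,
  lincomb env (fun j => r * c j) = vscal r (lincomb env c).
Proof.
  induction env as [|v env IH]; intros; simpl.
  - rewrite vscal_zero_r; auto.
  - rewrite IH, vscal_distr_v, vscal_assoc. auto.
Qed.

Lemma lincomb_zero env : lincomb env (fun _ => 0) = vzero.
Proof.
  rewrite (lincomb_ext env _ (fun _ => 0 * 0)) by (intro; ring).
  rewrite lincomb_scal. apply vscal_zero_l.
Qed.

Lemma lincomb_basis env : forall n,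
  lincomb env (fun j => if Nat.eqb n j then 1 else 0) = nth n env vzero.
Proof.
  induction env as [|v env IH]; intros n; simpl.
  - destruct n; auto.
  - destruct n as [|n]; simpl.
    + rewrite vscal_one, lincomb_zero, vadd_zero. reflexivity.
    + rewrite vscal_zero_l, vadd_zero_l. apply IH.
Qed.

Lemma vexpr_eval_lincomb env e : vexpr_eval env e = lincomb env (vexpr_coeff e).
Proof.
  induction e; simpl.
  - symmetry; apply lincomb_basis.
  - symmetry; apply lincomb_zero.
  - rewrite lincomb_add, IHe1, IHe2; auto.
  - rewrite (lincomb_ext env _ (fun j => -1 * vexpr_coeff e j)) by (intro; ring).
    rewrite lincomb_scal, vopp_scal, IHe; auto.
  - rewrite lincomb_scal, IHe; auto.
  - rewrite (lincomb_ext env _ (fun j => vexpr_coeff e1 j + -1 * vexpr_coeff e2 j))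
      by (intro; ring).
    rewrite lincomb_add, lincomb_scal, IHe1, IHe2. unfold vsub. rewrite vopp_scal; auto.
Qed.

Lemma vexpr_eval_eq env e1 e2 :
  (forall j, vexpr_coeff e1 j = vexpr_coeff e2 j) -> vexpr_eval env e1 = vexpr_eval env e2.
Proof. intro H. rewrite !vexpr_eval_lincomb. apply lincomb_ext, H. Qed.

End VectorAlgebra.

Ltac atom_index x l :=
  lazymatch l with
  | x :: _ => constr:(O)
  | _ :: ?l' => let n := atom_index x l' in constr:(S n)
  end.

Ltac add_atom x env :=
  match constr:(tt) with
  | _ => let _ := atom_index x env in env
  | _ => constr:(x :: env)
  end.

Ltac collect_atoms t env :=
  lazymatch t with
  | vadd ?a ?b => let e := collect_atoms a env in collect_atoms b e
  | vsub ?a ?b => let e := collect_atoms a env in collect_atoms b e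
  | vopp ?a => collect_atoms a env
  | vscal _ ?a => collect_atoms a env
  | vzero => env
  | _ => add_atom t env
  end.

Ltac reify_vexpr env t :=
  lazymatch t with
  | vadd ?a ?b =>
      let ra := reify_vexpr env a in let rb := reify_vexpr env b in constr:(Add ra rb)
  | vsub ?a ?b =>
      let ra := reify_vexpr env a in let rb := reify_vexpr env b in constr:(Sub ra rb)
  | vopp ?a => let ra := reify_vexpr env a in constr:(Opp ra)
  | vscal ?r ?a => let ra := reify_vexpr env a in constr:(Scal r ra)
  | vzero => constr:(Zero)
  | _ => let n := atom_index t env in constr:(Atom n)
  end.

Ltac coeffs_agree env :=
  lazymatch env with
  | nil => intros; simpl; first [ring | field; lra]
  | _ :: ?env' =>
      let j := fresh "j" in
      intro j; destruct j as [|j]; [simpl; first [ring | field; lra] | revert j; coeffs_agree env']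
  end.

(** [vlin] proves an identity between linear combinations of vectors
    (the atoms are the maximal subterms not built from the vector operations). *)
Ltac vlin :=
  lazymatch goal with
  | |- @eq (car ?V) ?l ?r =>
      let env0 := collect_atoms l (@nil (car V)) in
      let env := collect_atoms r env0 in
      let rl := reify_vexpr env l in let rr := reify_vexpr env r in
      change (vexpr_eval V env rl = vexpr_eval V env rr);
      apply vexpr_eval_eq; coeffs_agree env
  end.

Section NormFacts.
Variable V : NormedSpace.
Implicit Types x y z : V.

Lemma vsub_triangle x y z : vnorm (vsub x z) <= vnorm (vsub x y) + vnorm (vsub y z).
Proof.
  replace (vsub x z) with (vadd (vsub x y) (vsub y z)) by vlin. apply vnorm_triangle.
Qed.

Lemma vnorm_sub_sym x y : vnorm (vsub x y) = vnorm (vsub y x).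
Proof. replace (vsub x y) with (vopp (vsub y x)) by vlin. apply vnorm_opp. Qed.

Lemma vnorm_sub_self x : vnorm (vsub x x) = 0.
Proof. replace (vsub x x) with (@vzero V) by vlin. apply vnorm_zero. Qed.

End NormFacts.

Section LinearMaps.
Variables V W : NormedSpace.
Variable f : V -> W.
Hypothesis Hf : is_linear f.

Lemma linear_add x y : f (vadd x y) = vadd (f x) (f y).
Proof. apply Hf. Qed.

Lemma linear_scal a x : f (vscal a x) = vscal a (f x).
Proof. apply Hf. Qed.

Lemma linear_opp x : f (vopp x) = vopp (f x).
Proof. rewrite !vopp_scal. apply Hf. Qed.

Lemma linear_sub x y : f (vsub x y) = vsub (f x) (f y).
Proof. unfold vsub. rewrite linear_add, linear_opp. reflexivity. Qed.

End LinearMaps.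

Lemma exp_le x y : x <= y -> exp x <= exp y.
Proof.
  intro H. destruct (Req_dec x y) as [->|]; [lra|]. left; apply exp_increasing; lra.
Qed.

Lemma le_up_to_eps a b c : 0 <= c -> (forall eps, 0 < eps -> a <= b + c * eps) -> a <= b.
Proof.
  intros Hc H. destruct (Rle_dec a b) as [|Hn]; auto. exfalso.
  set (eps := (a - b) / (2 * (c + 1))).
  assert (He : 0 < eps) by (unfold eps; apply Rdiv_lt_0_compat; lra).
  assert (Hce : c * eps < a - b).
  { unfold eps. apply Rmult_lt_reg_r with (2 * (c + 1)); [lra|].
    unfold Rdiv. rewrite !Rmult_assoc, Rinv_l by lra. nra. }
  specialize (H eps He). lra.
Qed.

Lemma steps_eventually_small t sig : 0 < t -> 0 < sig ->
  exists N, forall n, (N <= n)%nat -> (1 <= n)%nat -> 0 < t / INR n < sig.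
Proof.
  intros Ht Hs. destruct (INR_unbounded (t / sig)) as [N HN]. exists N. intros n Hn H1.
  assert (Hn0 : 0 < INR n) by (apply lt_0_INR; lia).
  assert (INR N <= INR n) by (apply le_INR; auto).
  split; [apply Rdiv_lt_0_compat; lra|].
  apply Rmult_lt_reg_r with (INR n / sig); [apply Rdiv_lt_0_compat; lra|].
  replace (t / INR n * (INR n / sig)) with (t / sig) by (field; lra).
  replace (sig * (INR n / sig)) with (INR n) by (field; lra). lra.
Qed.

Lemma small_step a rho : 0 < a -> 0 < rho -> exists k : nat, (1 <= k)%nat /\ a / INR k < rho.
Proof.
  intros Ha Hr. destruct (steps_eventually_small a rho Ha Hr) as [N HN].
  exists (Nat.max N 1). split; [lia|]. apply HN; lia.
Qed.

Lemma grid_cell t rho : 0 <= t -> 0 < rho ->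
  exists i : nat, INR i * rho <= t < INR (S i) * rho.
Proof.
  intros Ht Hr. destruct (INR_archimed rho t Hr) as [n Hn].
  induction n as [|n IH].
  - simpl in Hn. lra.
  - destruct (Rlt_dec t (INR n * rho)) as [Hlt|Hge].
    + apply IH; lra.
    + exists n. split; lra.
Qed.

Lemma telescope (V : NormedSpace) (u : nat -> V) (b : R) (k : nat) :
  (forall j, (j < k)%nat -> vnorm (vsub (u (S j)) (u j)) <= b) ->
  vnorm (vsub (u k) (u O)) <= INR k * b.
Proof.
  induction k as [|k IH]; intro H.
  - rewrite vnorm_sub_self. simpl. lra.
  - rewrite S_INR. eapply Rle_trans; [apply (vsub_triangle _ _ (u k))|].
    assert (vnorm (vsub (u k) (u O)) <= INR k * b) by (apply IH; intros; apply H; lia).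
    assert (vnorm (vsub (u (S k)) (u k)) <= b) by (apply H; lia). lra.
Qed.

Lemma finite_common_index (Q : nat -> nat -> Prop) (k : nat) :
  (forall j, (j < k)%nat -> exists N, forall m, (N <= m)%nat -> Q j m) ->
  exists N, forall j m, (j < k)%nat -> (N <= m)%nat -> Q j m.
Proof.
  induction k as [|k IH]; intro H.
  - exists O. intros; lia.
  - destruct IH as [N1 H1]; [intros; apply H; lia|].
    destruct (H k ltac:(lia)) as [N2 H2].
    exists (Nat.max N1 N2). intros j m Hj Hm.
    destruct (Nat.eq_dec j k) as [->|]; [apply H2 | apply H1]; lia.
Qed.

Lemma seq_lim_bounded (V : NormedSpace) (u : nat -> V) l : seq_lim u l ->
  exists K, 0 <= K /\ forall m, vnorm (u m) <= K.
Proof.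
  intro H. destruct (H 1 ltac:(lra)) as [N HN].
  assert (Hhead : forall k, exists K, 0 <= K /\ forall m, (m < k)%nat -> vnorm (u m) <= K).
  { induction k as [|k [K [HK0 HK]]].
    - exists 0. split; [lra | intros; lia].
    - exists (Rmax K (vnorm (u k))). split; [eapply Rle_trans; [apply HK0 | apply Rmax_l]|].
      intros m Hm. destruct (Nat.eq_dec m k) as [->|]; [apply Rmax_r|].
      eapply Rle_trans; [apply HK; lia | apply Rmax_l]. }
  destruct (Hhead N) as [K [HK0 HK]].
  exists (Rmax K (vnorm l + 1)). split; [eapply Rle_trans; [apply HK0 | apply Rmax_l]|].
  intro m. destruct (Nat.lt_ge_cases m N) as [Hm|Hm].
  - eapply Rle_trans; [apply HK; auto | apply Rmax_l].
  - eapply Rle_trans; [|apply Rmax_r].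
    replace (u m) with (vadd (vsub (u m) l) l) by vlin.
    eapply Rle_trans; [apply vnorm_triangle|]. specialize (HN m Hm). lra.
Qed.

(** A family of sequences [q n] converging to [g n] converges uniformly in [n]
    when, for large [n], both [q n m] (large [m]) and [g n] are close to one
    common point [l]: the finitely many remaining [n] are handled one by one. *)
Lemma uniform_convergence_from_tail (V : NormedSpace) (q : nat -> nat -> V)
    (g : nat -> V) (l : V) :
  (forall n, (1 <= n)%nat -> seq_lim (q n) (g n)) ->
  (forall eps, 0 < eps -> exists K N, forall n m,
     (1 <= n)%nat -> (K <= n)%nat -> (N <= m)%nat -> vnorm (vsub (q n m) l) <= eps) ->
  (forall eps, 0 < eps -> exists K, forall n,
     (1 <= n)%nat -> (K <= n)%nat -> vnorm (vsub (g n) l) <= eps) ->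
  forall eps, 0 < eps -> exists N, forall m n,
    (1 <= n)%nat -> (N <= m)%nat -> vnorm (vsub (q n m) (g n)) <= eps.
Proof.
  intros Hpt Hq Hg eps He.
  destruct (Hq (eps / 2) ltac:(lra)) as [K1 [N1 HN1]].
  destruct (Hg (eps / 2) ltac:(lra)) as [K2 HK2].
  destruct (finite_common_index
              (fun n m => (1 <= n)%nat -> vnorm (vsub (q n m) (g n)) <= eps)
              (Nat.max K1 K2)) as [Nf HNf].
  { intros n _. destruct n as [|n]; [exists O; intros; lia|].
    destruct (Hpt (S n) ltac:(lia) eps He) as [N HN]. exists N. intros m Hm _. auto. }
  exists (Nat.max N1 Nf). intros m n H1 Hm.
  destruct (Nat.lt_ge_cases n (Nat.max K1 K2)) as [Hn|Hn]; [apply HNf; auto; lia|].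
  eapply Rle_trans; [apply (vsub_triangle _ _ l)|].
  rewrite (vnorm_sub_sym _ l).
  assert (vnorm (vsub (q n m) l) <= eps / 2) by (apply HN1; lia).
  assert (vnorm (vsub (g n) l) <= eps / 2) by (apply HK2; lia).
  lra.
Qed.

Section LimitsAtZero.
Variable V : NormedSpace.

Lemma lim_0plus_unique (f : R -> V) a b : lim_0plus f a -> lim_0plus f b -> a = b.
Proof.
  intros Ha Hb. apply vnorm_sub_eq0. apply Rle_antisym; [|apply vnorm_nonneg].
  apply (le_up_to_eps _ 0 2); [lra|]. intros eps He.
  destruct (Ha eps He) as [d1 [Hd1 H1]]. destruct (Hb eps He) as [d2 [Hd2 H2]].
  set (h := Rmin d1 d2 / 2).
  assert (0 < Rmin d1 d2) by (apply Rmin_glb_lt; auto).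
  assert (Rmin d1 d2 <= d1) by apply Rmin_l. assert (Rmin d1 d2 <= d2) by apply Rmin_r.
  assert (A1 := H1 h ltac:(unfold h; lra)). assert (A2 := H2 h ltac:(unfold h; lra)).
  eapply Rle_trans; [apply (vsub_triangle _ _ (f h))|]. rewrite vnorm_sub_sym. lra.
Qed.

Lemma lim_0plus_ext (f g : R -> V) a : (forall h, 0 < h -> f h = g h) ->
  lim_0plus f a -> lim_0plus g a.
Proof.
  intros E H eps He. destruct (H eps He) as [d [Hd H1]]. exists d; split; auto.
  intros h Hh. rewrite <- E by lra. auto.
Qed.

Lemma lim_0plus_sub (f g : R -> V) a b : lim_0plus f a -> lim_0plus g b ->
  lim_0plus (fun h => vsub (f h) (g h)) (vsub a b).
Proof.
  intros Ha Hb eps He.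
  destruct (Ha (eps / 2) ltac:(lra)) as [d1 [Hd1 H1]].
  destruct (Hb (eps / 2) ltac:(lra)) as [d2 [Hd2 H2]].
  exists (Rmin d1 d2). split; [apply Rmin_glb_lt; auto|].
  intros h Hh. assert (Rmin d1 d2 <= d1) by apply Rmin_l. assert (Rmin d1 d2 <= d2) by apply Rmin_r.
  assert (A1 := H1 h ltac:(lra)). assert (A2 := H2 h ltac:(lra)).
  replace (vsub (vsub (f h) (g h)) (vsub a b)) with
    (vadd (vsub (f h) a) (vopp (vsub (g h) b))) by vlin.
  eapply Rle_trans; [apply vnorm_triangle|]. rewrite vnorm_opp. lra.
Qed.

End LimitsAtZero.

Lemma lim_0plus_map (V W : NormedSpace) (L : V -> W) C (f : R -> V) a :
  is_linear L -> opnorm_le L C -> lim_0plus f a -> lim_0plus (fun h => L (f h)) (L a).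
Proof.
  intros HL HC Ha eps He.
  assert (HC0 : 0 <= Rabs C) by apply Rabs_pos.
  destruct (Ha (eps / (Rabs C + 1))) as [d [Hd H1]]; [apply Rdiv_lt_0_compat; lra|].
  exists d; split; auto. intros h Hh.
  rewrite <- (linear_sub _ _ L HL). eapply Rle_trans; [apply HC|].
  specialize (H1 h Hh).
  assert (0 <= vnorm (vsub (f h) a)) by apply vnorm_nonneg.
  assert (C <= Rabs C) by apply Rle_abs.
  apply Rle_trans with (Rabs C * (eps / (Rabs C + 1))).
  - apply Rle_trans with (Rabs C * vnorm (vsub (f h) a)); [nra|].
    apply Rmult_le_compat_l; auto.
  - unfold Rdiv. rewrite <- Rmult_assoc. apply Rmult_le_reg_r with (Rabs C + 1); [lra|].
    rewrite Rmult_assoc, Rinv_l by lra. nra.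
Qed.

Lemma lim_0plus_scal (V : NormedSpace) (f : R -> V) a c : lim_0plus f a ->
  lim_0plus (fun h => vscal c (f h)) (vscal c a).
Proof.
  apply (lim_0plus_map _ _ (vscal c) (Rabs c)).
  - split; intros; [apply vscal_distr_v | rewrite !vscal_assoc, Rmult_comm; reflexivity].
  - intro x. rewrite vnorm_scal. lra.
Qed.

Section SemigroupBasics.
Context {V : NormedSpace} {T : R -> V -> V} {D : V -> Prop} {A : V -> V}.
Hypothesis HT : generates D A T.

Lemma semigroup_linear t : 0 <= t -> is_linear (T t).
Proof. intro. destruct HT as [[H1 _] _]. apply (H1 t H). Qed.

Lemma semigroup_zero y : T 0 y = y.
Proof. destruct HT as [[_ [H _]] _]. apply H. Qed.

Lemma semigroup_add t s y : 0 <= t -> 0 <= s -> T (t + s) y = T t (T s y).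
Proof. destruct HT as [[_ [_ [H _]]] _]. apply H. Qed.

Lemma generator_limit y : D y -> lim_0plus (fun h => vscal (/ h) (vsub (T h y) y)) (A y).
Proof. destruct HT as [_ [_ H]]. apply H. Qed.

Lemma generator_domain y a : lim_0plus (fun h => vscal (/ h) (vsub (T h y) y)) a -> D y.
Proof. destruct HT as [_ [H _]]. intro. apply H. eauto. Qed.

Lemma generator_first_order y : D y -> forall eps, 0 < eps ->
  exists rho, 0 < rho /\ forall d, 0 < d < rho ->
    vnorm (vsub (vsub (T d y) y) (vscal d (A y))) <= d * eps.
Proof.
  intros Hy eps He. destruct (generator_limit y Hy eps He) as [rho [Hrho Hr]].
  exists rho. split; auto. intros d Hd.
  replace (vsub (vsub (T d y) y) (vscal d (A y))) with
    (vscal d (vsub (vscal (/ d) (vsub (T d y) y)) (A y))) by vlin.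
  rewrite vnorm_scal, Rabs_pos_eq by lra. apply Rmult_le_compat_l; [lra | apply Hr; lra].
Qed.

Lemma domain_invariant t y : 0 <= t -> D y -> D (T t y) /\ A (T t y) = T t (A y).
Proof.
  intros Ht Hy.
  destruct HT as [[Hbl _] _]. destruct (proj2 (Hbl t Ht)) as [Ct HCt].
  assert (Hlim : lim_0plus (fun h => vscal (/ h) (vsub (T h (T t y)) (T t y))) (T t (A y))).
  { eapply lim_0plus_ext;
      [|apply (lim_0plus_map _ _ (T t) Ct); [apply semigroup_linear; lra | exact HCt
        | apply generator_limit, Hy]].
    intros h Hh. simpl. rewrite <- semigroup_add, Rplus_comm, semigroup_add by lra.
    rewrite (linear_scal _ _ _ (semigroup_linear t Ht)),
      (linear_sub _ _ _ (semigroup_linear t Ht)). reflexivity. }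
  assert (Hd : D (T t y)) by (eapply generator_domain; eauto).
  split; auto. eapply lim_0plus_unique; [apply generator_limit; auto | exact Hlim].
Qed.

Lemma domain_difference_quotient eta y : 0 < eta -> D y ->
  D (vscal (/ eta) (vsub (T eta y) y)).
Proof.
  intros Heta Hy.
  assert (Hd : D (T eta y)) by (apply domain_invariant; auto; lra).
  apply generator_domain with (vscal (/ eta) (vsub (A (T eta y)) (A y))).
  eapply lim_0plus_ext;
    [|apply lim_0plus_scal, lim_0plus_sub; apply generator_limit; eassumption].
  intros h Hh. simpl.
  rewrite (linear_scal _ _ _ (semigroup_linear h ltac:(lra))),
    (linear_sub _ _ _ (semigroup_linear h ltac:(lra))).
  vlin.
Qed.

End SemigroupBasics.

Section SemigroupGrowth.
Context {V : NormedSpace} {T : R -> V -> V} {D : V -> Prop} {A : V -> V}.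
Hypothesis HT : generates D A T.
Variables M om : R.
Hypothesis HM : 1 <= M.
Hypothesis Hbound : forall h, 0 < h -> opnorm_le (T h) (M * exp (om * h)).

(** A bound for [||T t||] valid uniformly for [t] in [[0, h]]. *)
Definition growth (h : R) : R := M * exp (Rabs om * h).

Lemma growth_ge1 h : 0 <= h -> 1 <= growth h.
Proof.
  intro. unfold growth. assert (1 <= exp (Rabs om * h)).
  { rewrite <- exp_0. apply exp_le. assert (0 <= Rabs om) by apply Rabs_pos. nra. }
  nra.
Qed.

Lemma semigroup_bound t h y : 0 <= t <= h -> vnorm (T t y) <= growth h * vnorm y.
Proof.
  intro Ht. assert (0 <= vnorm y) by apply vnorm_nonneg.
  destruct (Req_dec t 0) as [->|Ht0].
  - rewrite (semigroup_zero HT). assert (1 <= growth h) by (apply growth_ge1; lra). nra.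
  - eapply Rle_trans; [apply Hbound; lra|]. apply Rmult_le_compat_r; auto.
    unfold growth. apply Rmult_le_compat_l; [lra|]. apply exp_le.
    assert (om * t <= Rabs om * t) by (apply Rmult_le_compat_r; [lra | apply Rle_abs]).
    assert (0 <= Rabs om) by apply Rabs_pos. nra.
Qed.

Lemma orbit_uniform_continuity y h : 0 <= h -> forall eps, 0 < eps ->
  exists rho, 0 < rho /\ forall t t', 0 <= t -> t <= t' -> t' <= h -> t' - t < rho ->
    vnorm (vsub (T t' y) (T t y)) <= eps.
Proof.
  intros Hh eps He.
  assert (HC := growth_ge1 h Hh).
  destruct HT as [[_ [_ [_ Hcont]]] _].
  destruct (Hcont y (eps / growth h)) as [rho [Hrho Hr]]; [apply Rdiv_lt_0_compat; lra|].
  exists rho. split; auto. intros t t' H1 H2 H3 H4.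
  replace t' with (t + (t' - t)) at 1 by ring. rewrite (semigroup_add HT) by lra.
  rewrite <- (linear_sub _ _ _ (semigroup_linear HT t H1)).
  eapply Rle_trans; [apply (semigroup_bound _ h); lra|].
  destruct (Req_dec t t') as [<-|Hne].
  - replace (t - t) with 0 by ring. rewrite (semigroup_zero HT), vnorm_sub_self. lra.
  - specialize (Hr (t' - t) ltac:(lra)).
    apply Rmult_le_reg_r with (/ growth h); [apply Rinv_0_lt_compat; lra|].
    rewrite Rmult_comm, <- Rmult_assoc, Rinv_l, Rmult_1_l by lra. exact Hr.
Qed.

(** The first-order error propagates along orbits:
    [T d z - z - d A z = T t (T d y - y - d A y)] for [z = T t y]. *)
Lemma orbit_first_order_error y t h d : D y -> 0 <= t <= h -> 0 <= d ->
  vnorm (vsub (vsub (T d (T t y)) (T t y)) (vscal d (A (T t y))))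
    <= growth h * vnorm (vsub (vsub (T d y) y) (vscal d (A y))).
Proof.
  intros Hy Ht Hd. rewrite (proj2 (domain_invariant HT t y ltac:(lra) Hy)).
  rewrite <- (semigroup_add HT), Rplus_comm, (semigroup_add HT) by lra.
  assert (Hlin := semigroup_linear HT t ltac:(lra)).
  rewrite <- (linear_scal _ _ _ Hlin), <- !(linear_sub _ _ _ Hlin).
  apply semigroup_bound. lra.
Qed.

(** Proof: split [[0, d]] into [k] steps of length [d/k] on which the
    difference quotient is [eps]-close to [A y], and telescope. *)
Lemma mean_value_estimate y d K : D y -> 0 < d ->
  (forall r, 0 <= r <= d -> vnorm (vsub (T r (A y)) (A y)) <= K) ->
  vnorm (vsub (vsub (T d y) y) (vscal d (A y))) <= d * K.
Proof.
  intros Hy Hd HK.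
  assert (HC : 1 <= growth d) by (apply growth_ge1; lra).
  apply (le_up_to_eps _ _ (d * growth d)); [nra|]. intros eps He.
  destruct (generator_first_order HT y Hy eps He) as [rho [Hrho Hr]].
  destruct (small_step d rho Hd Hrho) as [k [Hk Hkr]].
  assert (Hk0 : 0 < INR k) by (apply lt_0_INR; lia).
  set (dd := d / INR k) in *.
  assert (Hdd : 0 < dd) by (unfold dd; apply Rdiv_lt_0_compat; lra).
  assert (Ek : INR k * dd = d) by (unfold dd; field; lra).
  set (u := fun j : nat => vsub (T (INR j * dd) y) (vscal (INR j * dd) (A y))).
  replace (vsub (vsub (T d y) y) (vscal d (A y))) with (vsub (u k) (u O)).
  2: { unfold u. rewrite Ek. simpl. rewrite Rmult_0_l, (semigroup_zero HT). vlin. }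
  replace (d * K + d * growth d * eps) with (INR k * (dd * growth d * eps + dd * K))
    by (rewrite <- Ek; ring).
  apply telescope. intros j Hj.
  assert (Hj1 : INR j * dd + dd <= d).
  { rewrite <- Ek. replace (INR j * dd + dd) with (INR (S j) * dd) by (rewrite S_INR; ring).
    apply Rmult_le_compat_r; [lra | apply le_INR; lia]. }
  assert (Hj0 : 0 <= INR j * dd) by (apply Rmult_le_pos; [apply pos_INR | lra]).
  assert (Hstep : vsub (u (S j)) (u j) =
     vadd (T (INR j * dd) (vsub (vsub (T dd y) y) (vscal dd (A y))))
          (vscal dd (vsub (T (INR j * dd) (A y)) (A y)))).
  { unfold u. rewrite S_INR. replace ((INR j + 1) * dd) with (INR j * dd + dd) by ring.
    rewrite (semigroup_add HT) by lra.
    rewrite !(linear_sub _ _ _ (semigroup_linear HT _ Hj0)),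
      (linear_scal _ _ _ (semigroup_linear HT _ Hj0)).
    vlin. }
  rewrite Hstep. eapply Rle_trans; [apply vnorm_triangle|].
  rewrite vnorm_scal, Rabs_pos_eq by lra.
  apply Rplus_le_compat.
  - eapply Rle_trans; [apply (semigroup_bound _ d); lra|].
    replace (dd * growth d * eps) with (growth d * (dd * eps)) by ring.
    apply Rmult_le_compat_l; [lra|].
    apply Hr. lra.
  - apply Rmult_le_compat_l; [lra | apply HK; lra].
Qed.

Lemma domain_lipschitz y s : D y -> 0 < s <= 1 ->
  vnorm (vsub (T s y) y) <= s * (growth 1 + 2) * vnorm (A y).
Proof.
  intros Hy Hs.
  assert (HAy := vnorm_nonneg _ (A y)).
  assert (H : vnorm (vsub (vsub (T s y) y) (vscal s (A y))) <= s * ((growth 1 + 1) * vnorm (A y))).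
  { apply mean_value_estimate; auto; [lra|]. intros r Hr.
    eapply Rle_trans; [apply vnorm_triangle|]. rewrite vnorm_opp.
    assert (vnorm (T r (A y)) <= growth 1 * vnorm (A y)) by (apply semigroup_bound; lra). lra. }
  replace (vsub (T s y) y) with (vadd (vsub (vsub (T s y) y) (vscal s (A y))) (vscal s (A y)))
    by vlin.
  eapply Rle_trans; [apply vnorm_triangle|]. rewrite vnorm_scal, Rabs_pos_eq by lra. nra.
Qed.

End SemigroupGrowth.

Section Approximation.
Variable X : NormedSpace.
Variable Xm : nat -> NormedSpace.
Variable P : forall m, X -> Xm m.
Variable J : forall m, Xm m -> X.
Variables MJ MP : R.
Hypothesis HPb : forall m, bounded_linear (P m).
Hypothesis HJb : forall m, bounded_linear (J m).
Hypothesis Hi : forall m (y : Xm m), P m (J m y) = y.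
Hypothesis Hii : forall x : X, seq_lim (fun m => J m (P m x)) x.
Hypothesis HMJ : 0 < MJ.
Hypothesis HMP : 0 < MP.
Hypothesis Hiii : forall m, opnorm_le (J m) MJ /\ opnorm_le (P m) MP.
Variable S : R -> X -> X.
Variable DB : X -> Prop.
Variable B : X -> X.
Hypothesis HS : generates DB B S.
Variable Sm : forall m, R -> Xm m -> Xm m.
Variable DBm : forall m, Xm m -> Prop.
Variable Bm : forall m, Xm m -> Xm m.
Hypothesis HSm : forall m, generates (DBm m) (Bm m) (Sm m).
Variables MS om : R.
Hypothesis HMS : 1 <= MS.
Hypothesis HSb : forall h, 0 < h -> opnorm_le (S h) (MS * exp (om * h)).
Hypothesis HSmb : forall m h, 0 < h -> opnorm_le (Sm m h) (MS * exp (om * h)).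
Hypothesis HBconv : forall x, DB x ->
  (forall m, DBm m (P m x)) /\ seq_lim (fun m => J m (Bm m (P m x))) (B x).

Local Notation C := (growth MS om).

Lemma P_linear m : is_linear (P m). Proof. apply HPb. Qed.
Lemma J_linear m : is_linear (J m). Proof. apply HJb. Qed.
Lemma P_bound m v : vnorm (P m v) <= MP * vnorm v. Proof. apply Hiii. Qed.
Lemma J_bound m v : vnorm (J m v) <= MJ * vnorm v. Proof. apply Hiii. Qed.

Lemma S_bound t h y : 0 <= t <= h -> vnorm (S t y) <= C h * vnorm y.
Proof. apply (semigroup_bound HS MS om HMS HSb). Qed.

Lemma Sm_bound m t h y : 0 <= t <= h -> vnorm (Sm m t y) <= C h * vnorm y.
Proof. apply (semigroup_bound (HSm m) MS om HMS (HSmb m)). Qed.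

(** Since [P m] is a left inverse of [J m], the discrepancy between the
    discrete generator and the projected one is controlled in [X]. *)
Lemma generator_discrepancy m z :
  vnorm (vsub (Bm m (P m z)) (P m (B z))) <= MP * vnorm (vsub (J m (Bm m (P m z))) (B z)).
Proof.
  rewrite <- (Hi m (Bm m (P m z))) at 1. rewrite <- (linear_sub _ _ _ (P_linear m)).
  apply P_bound.
Qed.

Definition equicontinuous (W : X -> Prop) : Prop :=
  forall eps, 0 < eps -> exists sig, 0 < sig <= 1 /\
    forall m s w, W w -> 0 < s <= sig -> vnorm (vsub (Sm m s (P m w)) (P m w)) <= eps.

Lemma equicontinuous_union (W1 W2 W : X -> Prop) :
  equicontinuous W1 -> equicontinuous W2 -> (forall w, W w -> W1 w \/ W2 w) ->
  equicontinuous W.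
Proof.
  intros H1 H2 Hsub eps He.
  destruct (H1 eps He) as [sig1 [Hs1 K1]]. destruct (H2 eps He) as [sig2 [Hs2 K2]].
  exists (Rmin sig1 sig2).
  assert (Rmin sig1 sig2 <= sig1) by apply Rmin_l. assert (Rmin sig1 sig2 <= sig2) by apply Rmin_r.
  split; [split; [apply Rmin_glb_lt|]; lra|].
  intros m s w Hw Hs. destruct (Hsub w Hw); [apply K1 | apply K2]; auto; lra.
Qed.

(** A single domain vector is equicontinuous: its orbits are Lipschitz with
    constants [~ ||Bm m (P m v)||], which stay bounded by the consistency
    hypothesis. *)
Lemma equicontinuous_domain_point v : DB v -> equicontinuous (fun w => w = v).
Proof.
  intros Hv eps He.
  destruct (seq_lim_bounded _ _ _ (proj2 (HBconv v Hv))) as [K [HK0 HK]].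
  assert (HC1 := growth_ge1 MS om HMS 1 ltac:(lra)).
  set (k := (C 1 + 2) * MP * K + 1).
  assert (Hk : 1 <= k) by (unfold k; assert (0 <= (C 1 + 2) * MP * K) by
    (apply Rmult_le_pos; [apply Rmult_le_pos|]; lra); lra).
  exists (Rmin 1 (eps / k)).
  assert (Hmin : Rmin 1 (eps / k) <= eps / k) by apply Rmin_r.
  split; [split; [apply Rmin_glb_lt; [lra | apply Rdiv_lt_0_compat; lra] | apply Rmin_l]|].
  intros m s w -> Hs.
  assert (Hs1 : s <= 1) by (eapply Rle_trans; [apply Hs | apply Rmin_l]).
  assert (HB : vnorm (Bm m (P m v)) <= MP * K).
  { rewrite <- (Hi m (Bm m (P m v))). eapply Rle_trans; [apply P_bound|].
    apply Rmult_le_compat_l; [lra | apply HK]. }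
  eapply Rle_trans.
  { apply (domain_lipschitz (HSm m) MS om HMS (HSmb m)); [apply HBconv; auto | lra]. }
  apply Rle_trans with (s * k).
  - assert ((C 1 + 2) * vnorm (Bm m (P m v)) <= (C 1 + 2) * (MP * K))
      by (apply Rmult_le_compat_l; lra).
    unfold k. nra.
  - apply Rle_trans with (eps / k * k); [apply Rmult_le_compat_r; lra|].
    right. field. lra.
Qed.

Lemma equicontinuous_finite (v : nat -> X) (L : nat) :
  (forall i, (i < L)%nat -> DB (v i)) ->
  equicontinuous (fun w => exists i, (i < L)%nat /\ w = v i).
Proof.
  induction L as [|L IH]; intro Hv.
  - intros eps He. exists 1. split; [lra|]. intros m s w [i [Hi0 _]]. lia.
  - apply (equicontinuous_union _ _ _ (IH ltac:(intros; apply Hv; lia))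
             (equicontinuous_domain_point (v L) ltac:(apply Hv; lia))).
    intros w [i [HiL ->]]. destruct (Nat.eq_dec i L) as [->|]; [right | left]; eauto.
    exists i. split; auto; lia.
Qed.

(** Equicontinuity passes to sets approximable, to any precision, by
    equicontinuous sets, because [Sm m s (P m _) - P m _] is uniformly bounded. *)
Lemma equicontinuous_approx (W : X -> Prop) :
  (forall delta, 0 < delta -> exists W', equicontinuous W' /\
     forall w, W w -> exists w', W' w' /\ vnorm (vsub w w') <= delta) ->
  equicontinuous W.
Proof.
  intros Happ eps He.
  assert (HC1 := growth_ge1 MS om HMS 1 ltac:(lra)).
  set (c := (C 1 + 1) * MP).
  assert (Hc : 0 < c) by (unfold c; apply Rmult_lt_0_compat; lra).
  destruct (Happ (eps / (2 * c))) as [W' [HW' Hclose]]; [apply Rdiv_lt_0_compat; lra|].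
  destruct (HW' (eps / 2) ltac:(lra)) as [sig [Hsig Hsmall]].
  exists sig. split; auto. intros m s w Hw Hs.
  destruct (Hclose w Hw) as [w' [Hw' Hd]].
  assert (Hlin := semigroup_linear (HSm m) s ltac:(lra)).
  replace (vsub (Sm m s (P m w)) (P m w)) with
    (vadd (vsub (Sm m s (P m (vsub w w'))) (P m (vsub w w'))) (vsub (Sm m s (P m w')) (P m w'))).
  2: { rewrite (linear_sub _ _ _ (P_linear m)), (linear_sub _ _ _ Hlin). vlin. }
  eapply Rle_trans; [apply vnorm_triangle|].
  assert (Hfar : vnorm (vsub (Sm m s (P m (vsub w w'))) (P m (vsub w w'))) <= eps / 2).
  { eapply Rle_trans; [apply vnorm_triangle|]. rewrite vnorm_opp.
    assert (Hs1 := Sm_bound m s 1 (P m (vsub w w')) ltac:(lra)).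
    assert (Hp := P_bound m (vsub w w')).
    assert (Hn := vnorm_nonneg _ (vsub w w')).
    apply Rle_trans with (c * vnorm (vsub w w')); [unfold c; nra|].
    apply Rle_trans with (c * (eps / (2 * c))); [apply Rmult_le_compat_l; lra|].
    right. field. lra. }
  assert (vnorm (vsub (Sm m s (P m w')) (P m w')) <= eps / 2) by (apply Hsmall; auto).
  lra.
Qed.

(** The orbit [{S t (B x) | 0 <= t <= h}] of [B x] is equicontinuous:
    [B x] is approximated by a difference quotient [u] in the domain, and the
    (uniformly continuous) orbit of [u] by finitely many of its points. *)
Lemma orbit_equicontinuous x h : DB x -> 0 <= h ->
  equicontinuous (fun w => exists t, 0 <= t <= h /\ w = S t (B x)).
Proof.
  intros Hx Hh. apply equicontinuous_approx. intros delta Hd.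
  assert (HCh := growth_ge1 MS om HMS h Hh).
  destruct (generator_limit HS x Hx (delta / (2 * C h))) as [rho [Hrho Hr]];
    [apply Rdiv_lt_0_compat; lra|].
  set (u := vscal (/ (rho / 2)) (vsub (S (rho / 2) x) x)).
  assert (Hu : vnorm (vsub (B x) u) <= delta / (2 * C h)).
  { rewrite vnorm_sub_sym. apply Hr. lra. }
  assert (Du : DB u) by (apply (domain_difference_quotient HS); auto; lra).
  destruct (orbit_uniform_continuity HS MS om HMS HSb u h Hh (delta / 2) ltac:(lra))
    as [rho' [Hrho' Hcont]].
  destruct (INR_archimed (rho' / 2) h ltac:(lra)) as [L HL].
  exists (fun w => exists i, (i < L)%nat /\ w = S (INR i * (rho' / 2)) u). split.
  { apply equicontinuous_finite. intros i _. apply (domain_invariant HS); auto.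
    apply Rmult_le_pos; [apply pos_INR | lra]. }
  intros w [t [Ht ->]].
  destruct (grid_cell t (rho' / 2)) as [i [Hi1 Hi2]]; [lra | lra |].
  rewrite S_INR in Hi2.
  exists (S (INR i * (rho' / 2)) u). split.
  { exists i. split; auto. apply INR_lt. apply Rmult_lt_reg_r with (rho' / 2); lra. }
  assert (Hti : 0 <= INR i * (rho' / 2)) by (apply Rmult_le_pos; [apply pos_INR | lra]).
  eapply Rle_trans; [apply (vsub_triangle _ _ (S t u))|].
  assert (H1 : vnorm (vsub (S t (B x)) (S t u)) <= delta / 2).
  { rewrite <- (linear_sub _ _ _ (semigroup_linear HS t ltac:(lra))).
    eapply Rle_trans; [apply (S_bound t h); lra|].
    apply Rle_trans with (C h * (delta / (2 * C h))); [apply Rmult_le_compat_l; lra|].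
    right. field. lra. }
  assert (H2 : vnorm (vsub (S t u) (S (INR i * (rho' / 2)) u)) <= delta / 2)
    by (apply Hcont; lra).
  lra.
Qed.

Lemma local_generator_error m z d eE e3 : DB z -> 0 < d <= 1 ->
  (forall r, 0 < r <= d -> vnorm (vsub (Sm m r (P m (B z))) (P m (B z))) <= eE) ->
  vnorm (vsub (J m (Bm m (P m z))) (B z)) <= e3 ->
  vnorm (vsub (vsub (Sm m d (P m z)) (P m z)) (vscal d (Bm m (P m z))))
    <= d * (eE + (C 1 + 1) * MP * e3).
Proof.
  intros Hz Hd HE H3.
  assert (HeE : 0 <= eE) by (eapply Rle_trans; [apply vnorm_nonneg | apply (HE d); lra]).
  assert (He3 : 0 <= e3) by (eapply Rle_trans; [apply vnorm_nonneg | apply H3]).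
  assert (HC1 := growth_ge1 MS om HMS 1 ltac:(lra)).
  apply (mean_value_estimate (HSm m) MS om HMS (HSmb m)); [apply HBconv; auto | lra|].
  intros r Hr.
  set (w := Bm m (P m z)). set (p := P m (B z)).
  assert (Hc : vnorm (vsub w p) <= MP * e3).
  { eapply Rle_trans; [apply generator_discrepancy | apply Rmult_le_compat_l; lra]. }
  assert (Hc0 := vnorm_nonneg _ (vsub w p)).
  destruct (Req_dec r 0) as [->|Hr0].
  { rewrite (semigroup_zero (HSm m)), vnorm_sub_self.
    assert (0 <= MP * e3) by (apply Rmult_le_pos; lra). nra. }
  replace (vsub (Sm m r w) w) with
    (vadd (vadd (Sm m r (vsub w p)) (vsub (Sm m r p) p)) (vopp (vsub w p))).
  2: { rewrite (linear_sub _ _ _ (semigroup_linear (HSm m) r ltac:(lra))). vlin. }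
  eapply Rle_trans; [apply vnorm_triangle|]. rewrite vnorm_opp.
  eapply Rle_trans; [apply Rplus_le_compat_r, vnorm_triangle|].
  assert (vnorm (Sm m r (vsub w p)) <= C 1 * vnorm (vsub w p)) by (apply Sm_bound; lra).
  assert (vnorm (vsub (Sm m r p) p) <= eE) by (apply HE; lra).
  nra.
Qed.

Lemma difference_quotient_uniform x : DB x -> forall eps, 0 < eps ->
  exists sig, 0 < sig /\ exists N, forall h m, 0 < h <= sig -> (N <= m)%nat ->
    vnorm (vsub (vscal (/ h) (vsub (J m (Sm m h (P m x))) (J m (P m x))))
              (B x)) <= eps.
Proof.
  intros Hx eps He.
  assert (HC1 := growth_ge1 MS om HMS 1 ltac:(lra)).
  assert (Hprod : 0 < MJ * (C 1 + 1) * MP)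
    by (apply Rmult_lt_0_compat; [apply Rmult_lt_0_compat|]; lra).
  set (k := MJ * (C 1 + 1) * MP + 1).
  set (eE := eps / (2 * MJ)). set (e3 := eps / (2 * k)).
  destruct (orbit_equicontinuous x 0 Hx ltac:(lra) eE) as [sig [Hsig HE]];
    [apply Rdiv_lt_0_compat; lra|].
  destruct (proj2 (HBconv x Hx) e3) as [N HN]; [unfold e3, k; apply Rdiv_lt_0_compat; lra|].
  exists sig. split; [lra|]. exists N. intros h m Hh Hm.
  assert (Hloc := local_generator_error m x h eE e3 Hx ltac:(lra)).
  specialize (Hloc ltac:(intros r Hr; apply HE; [exists 0; split;
    [lra | rewrite (semigroup_zero HS); reflexivity] | lra]) (HN m Hm)).
  set (y := P m x) in *. set (w := Bm m y) in *.
  replace (vsub (vscal (/ h) (vsub (J m (Sm m h y)) (J m y))) (B x)) with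
    (vadd (vscal (/ h) (J m (vsub (vsub (Sm m h y) y) (vscal h w)))) (vsub (J m w) (B x))).
  2: { rewrite !(linear_sub _ _ _ (J_linear m)), (linear_scal _ _ _ (J_linear m)). vlin. }
  eapply Rle_trans; [apply vnorm_triangle|].
  rewrite vnorm_scal, Rabs_pos_eq by (left; apply Rinv_0_lt_compat; lra).
  assert (A1 : / h * vnorm (J m (vsub (vsub (Sm m h y) y) (vscal h w)))
               <= MJ * (eE + (C 1 + 1) * MP * e3)).
  { apply Rle_trans with (/ h * (MJ * (h * (eE + (C 1 + 1) * MP * e3)))).
    - apply Rmult_le_compat_l; [left; apply Rinv_0_lt_compat; lra|].
      eapply Rle_trans; [apply J_bound | apply Rmult_le_compat_l; lra].
    - right. field. lra. }
  assert (E : MJ * (eE + (C 1 + 1) * MP * e3) + e3 = eps).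
  { unfold eE, e3, k. field. split; lra. }
  assert (vnorm (vsub (J m w) (B x)) <= e3) by (apply HN; auto). lra.
Qed.

(** Accumulation of local errors: writing [h = k d] and telescoping along
    [u j = Sm m (j d) (P m (S (h - j d) x))], the global error at time [h] is
    at most [k] times the propagated one-step errors on the points
    [S (h - (j+1) d) x] of the exact orbit. *)
Lemma propagation_error m h d k x b : 0 < d -> INR k * d = h ->
  (forall j, (j < k)%nat ->
     let z := S (h - INR (Datatypes.S j) * d) x in
     vnorm (vsub (Sm m d (P m z)) (P m (S d z))) <= b) ->
  vnorm (vsub (Sm m h (P m x)) (P m (S h x))) <= INR k * (C h * b).
Proof.
  intros Hd Ek Hstep.
  set (u := fun j : nat => Sm m (INR j * d) (P m (S (h - INR j * d) x))).
  replace (vsub (Sm m h (P m x)) (P m (S h x))) with (vsub (u k) (u O)).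
  2: { unfold u. rewrite Ek. replace (h - h) with 0 by ring.
       replace (INR 0 * d) with 0 by (simpl; ring). replace (h - 0) with h by ring.
       rewrite (semigroup_zero HS), (semigroup_zero (HSm m)). reflexivity. }
  apply telescope. intros j Hj.
  assert (Hj0 : 0 <= INR j * d) by (apply Rmult_le_pos; [apply pos_INR | lra]).
  assert (Hj1 : INR (Datatypes.S j) * d <= h).
  { rewrite <- Ek. apply Rmult_le_compat_r; [lra | apply le_INR; lia]. }
  rewrite S_INR in Hj1.
  set (z := S (h - (INR j + 1) * d) x).
  assert (Eus : u (Datatypes.S j) = Sm m (INR j * d) (Sm m d (P m z))).
  { unfold u, z. rewrite S_INR, <- (semigroup_add (HSm m)) by lra. f_equal. ring. }
  assert (Euj : u j = Sm m (INR j * d) (P m (S d z))).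
  { unfold u, z. rewrite <- (semigroup_add HS) by lra. do 3 f_equal; ring. }
  rewrite Eus, Euj, <- (linear_sub _ _ _ (semigroup_linear (HSm m) _ Hj0)).
  eapply Rle_trans; [apply (Sm_bound m _ h); lra|].
  apply Rmult_le_compat_l; [assert (HC := growth_ge1 MS om HMS h); lra|].
  specialize (Hstep j Hj). rewrite S_INR in Hstep. exact Hstep.
Qed.

Lemma one_step_error m z d eE e3 : DB z -> 0 < d <= 1 ->
  (forall r, 0 < r <= d -> vnorm (vsub (Sm m r (P m (B z))) (P m (B z))) <= eE) ->
  vnorm (vsub (J m (Bm m (P m z))) (B z)) <= e3 ->
  vnorm (vsub (Sm m d (P m z)) (P m (S d z)))
    <= d * (eE + (C 1 + 1) * MP * e3)
       + MP * vnorm (vsub (vsub (S d z) z) (vscal d (B z))) + d * (MP * e3).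
Proof.
  intros Hz Hd HE H3.
  set (y := P m z).
  set (a := vsub (vsub (Sm m d y) y) (vscal d (Bm m y))).
  set (b := vsub (vsub (S d z) z) (vscal d (B z))).
  set (c := vsub (Bm m y) (P m (B z))).
  replace (vsub (Sm m d y) (P m (S d z))) with (vadd (vadd a (vopp (P m b))) (vscal d c)).
  2: { unfold a, b, c. rewrite !(linear_sub _ _ _ (P_linear m)), (linear_scal _ _ _ (P_linear m)).
       fold y. vlin. }
  eapply Rle_trans; [apply vnorm_triangle|].
  eapply Rle_trans; [apply Rplus_le_compat_r, vnorm_triangle|].
  rewrite vnorm_opp, vnorm_scal, Rabs_pos_eq by lra.
  assert (vnorm a <= d * (eE + (C 1 + 1) * MP * e3))
    by (apply local_generator_error; auto).
  assert (vnorm (P m b) <= MP * vnorm b) by apply P_bound.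
  assert (vnorm c <= MP * e3)
    by (eapply Rle_trans; [apply generator_discrepancy | apply Rmult_le_compat_l; lra]).
  assert (d * vnorm c <= d * (MP * e3)) by (apply Rmult_le_compat_l; lra).
  lra.
Qed.

Lemma orbit_step_error m x h t d e0 : DB x -> 0 <= t <= h -> 0 < d <= 1 ->
  (forall r w, 0 < r <= d -> (exists s, 0 <= s <= h /\ w = S s (B x)) ->
     vnorm (vsub (Sm m r (P m w)) (P m w)) <= e0) ->
  vnorm (vsub (vsub (S d x) x) (vscal d (B x))) <= d * e0 ->
  vnorm (vsub (J m (Bm m (P m (S t x)))) (B (S t x))) <= e0 ->
  vnorm (vsub (Sm m d (P m (S t x))) (P m (S d (S t x))))
    <= d * e0 * (1 + (C 1 + 2) * MP + MP * C h).
Proof.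
  intros Hx Ht Hd HE Hfirst Hcons.
  assert (HCh := growth_ge1 MS om HMS h ltac:(lra)).
  assert (He0 : 0 <= e0) by (eapply Rle_trans; [apply vnorm_nonneg | exact Hcons]).
  set (z := S t x) in *.
  assert (Hz : DB z) by (apply (domain_invariant HS); auto; lra).
  assert (HBz : B z = S t (B x)) by (apply (domain_invariant HS); auto; lra).
  eapply Rle_trans; [apply (one_step_error m z d e0 e0); auto|].
  { intros r Hr. apply HE; auto. exists t. auto. }
  assert (vnorm (vsub (vsub (S d z) z) (vscal d (B z))) <= C h * (d * e0)).
  { eapply Rle_trans; [apply (orbit_first_order_error HS MS om HMS HSb x t h d); auto; lra|].
    apply Rmult_le_compat_l; lra. }
  assert (MP * vnorm (vsub (vsub (S d z) z) (vscal d (B z))) <= MP * (C h * (d * e0)))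
    by (apply Rmult_le_compat_l; lra).
  nra.
Qed.

(** Consistency plus stability give convergence (on the domain): the
    approximating semigroups converge to [S h] at every domain vector. *)
Lemma semigroup_approximation x h : DB x -> 0 < h -> forall eps, 0 < eps ->
  exists N, forall m, (N <= m)%nat -> vnorm (vsub (Sm m h (P m x)) (P m (S h x))) <= eps.
Proof.
  intros Hx Hh eps He.
  assert (HC1 := growth_ge1 MS om HMS 1 ltac:(lra)).
  assert (HCh := growth_ge1 MS om HMS h ltac:(lra)).
  set (K := 1 + (C 1 + 2) * MP + MP * C h).
  assert (HK : 1 <= K) by (unfold K; assert (0 <= (C 1 + 2) * MP) by
    (apply Rmult_le_pos; lra); assert (0 <= MP * C h) by (apply Rmult_le_pos; lra); lra).
  set (e0 := eps / (h * C h * K)).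
  assert (He0 : 0 < e0).
  { unfold e0. apply Rdiv_lt_0_compat; [lra|].
    apply Rmult_lt_0_compat; [apply Rmult_lt_0_compat|]; lra. }
  destruct (orbit_equicontinuous x h Hx ltac:(lra) e0 He0) as [sE [HsE HE]].
  destruct (generator_first_order HS x Hx e0 He0) as [rB [HrB HB]].
  assert (Hmin : 0 < Rmin sE rB) by (apply Rmin_glb_lt; lra).
  assert (Hm1 := Rmin_l sE rB). assert (Hm2 := Rmin_r sE rB).
  (* steps [d = h / k] short enough for equicontinuity and first-order accuracy *)
  destruct (small_step h (Rmin sE rB) Hh Hmin) as [k [Hk Hkd]].
  assert (Hk0 : 0 < INR k) by (apply lt_0_INR; lia).
  set (d := h / INR k) in *.
  assert (Hd : 0 < d) by (unfold d; apply Rdiv_lt_0_compat; lra).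
  assert (Ek : INR k * d = h) by (unfold d; field; lra).
  set (tj := fun j : nat => h - INR (Datatypes.S j) * d).
  assert (Htj : forall j, (j < k)%nat -> 0 <= tj j <= h).
  { intros j Hj. unfold tj. assert (INR (Datatypes.S j) <= INR k) by (apply le_INR; lia).
    assert (0 <= INR (Datatypes.S j)) by apply pos_INR. split; nra. }
  destruct (finite_common_index
    (fun j m => vnorm (vsub (J m (Bm m (P m (S (tj j) x)))) (B (S (tj j) x))) <= e0) k)
    as [N HN].
  { intros j Hj. apply (proj2 (HBconv _ (proj1 (domain_invariant HS _ _ (proj1 (Htj j Hj)) Hx)))).
    exact He0. }
  exists N. intros m Hm.
  replace eps with (INR k * (C h * (d * e0 * K))).
  2: { replace (INR k * (C h * (d * e0 * K))) with ((INR k * d) * C h * K * e0) by ring.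
       rewrite Ek. unfold e0. field. split; lra. }
  apply (propagation_error m h d k x); auto.
  intros j Hj z. destruct (Htj j Hj) as [Ht1 Ht2].
  apply orbit_step_error; auto; try lra.
  - intros r w Hr Hw. apply HE; auto; lra.
  - apply HB; lra.
  - apply HN; auto.
Qed.

Lemma semigroup_convergence x h : DB x -> 0 < h ->
  seq_lim (fun m => J m (Sm m h (P m x))) (S h x).
Proof.
  intros Hx Hh eps He.
  destruct (semigroup_approximation x h Hx Hh (eps / (2 * MJ))) as [N1 HN1];
    [apply Rdiv_lt_0_compat; lra|].
  destruct (Hii (S h x) (eps / 2) ltac:(lra)) as [N0 HN0].
  exists (Nat.max N0 N1). intros m Hm.
  replace (vsub (J m (Sm m h (P m x))) (S h x)) with
    (vadd (J m (vsub (Sm m h (P m x)) (P m (S h x)))) (vsub (J m (P m (S h x))) (S h x))).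
  2: { rewrite (linear_sub _ _ _ (J_linear m)). vlin. }
  eapply Rle_trans; [apply vnorm_triangle|].
  assert (vnorm (J m (vsub (Sm m h (P m x)) (P m (S h x)))) <= MJ * (eps / (2 * MJ))).
  { eapply Rle_trans; [apply J_bound | apply Rmult_le_compat_l; [lra | apply HN1; lia]]. }
  assert (MJ * (eps / (2 * MJ)) = eps / 2) by (field; lra).
  assert (vnorm (vsub (J m (P m (S h x))) (S h x)) <= eps / 2) by (apply HN0; lia).
  lra.
Qed.

Lemma difference_quotient_convergence x h : DB x -> 0 < h ->
  seq_lim (fun m => vscal (/ h) (vsub (J m (Sm m h (P m x))) (J m (P m x))))
          (vscal (/ h) (vsub (S h x) x)).
Proof.
  intros Hx Hh eps He.
  destruct (semigroup_convergence x h Hx Hh (eps * h / 2)) as [N1 HN1]; [nra|].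
  destruct (Hii x (eps * h / 2)) as [N0 HN0]; [nra|].
  exists (Nat.max N0 N1). intros m Hm.
  replace (vsub (vscal (/ h) (vsub (J m (Sm m h (P m x))) (J m (P m x))))
                (vscal (/ h) (vsub (S h x) x))) with
    (vscal (/ h) (vsub (vsub (J m (Sm m h (P m x))) (S h x)) (vsub (J m (P m x)) x)))
    by vlin.
  rewrite vnorm_scal, Rabs_pos_eq by (left; apply Rinv_0_lt_compat; lra).
  eapply Rle_trans; [apply Rmult_le_compat_l; [left; apply Rinv_0_lt_compat; lra|]|].
  { eapply Rle_trans; [apply vnorm_triangle|]. rewrite vnorm_opp.
    apply Rplus_le_compat; [apply HN1 | apply HN0]; lia. }
  right. field. lra.
Qed.

Lemma difference_quotient_tail x t : DB x -> 0 < t -> forall eps, 0 < eps ->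
  exists K N, forall n m, (1 <= n)%nat -> (K <= n)%nat -> (N <= m)%nat ->
    vnorm (vsub (vscal (/ (t / INR n))
                   (vsub (J m (Sm m (t / INR n) (P m x))) (J m (P m x)))) (B x)) <= eps.
Proof.
  intros Hx Ht eps He.
  destruct (difference_quotient_uniform x Hx eps He) as [sig [Hsig [N HN]]].
  destruct (steps_eventually_small t sig Ht Hsig) as [K HK].
  exists K, N. intros n m H1 Hn Hm. apply HN; auto.
  specialize (HK n Hn H1). lra.
Qed.

End Approximation.

Theorem mainTheorem4
  (X : NormedSpace) (HX : complete X)
  (Xm : nat -> NormedSpace) (HXm : forall m, complete (Xm m))
  (P : forall m, X -> Xm m) (J : forall m, Xm m -> X)
  (MJ MP : R)
  (* approximation properties *)
  (HPb : forall m, bounded_linear (P m))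
  (HJb : forall m, bounded_linear (J m))
  (Hi : forall m (y : Xm m), P m (J m y) = y)
  (Hii : forall x : X, seq_lim (fun m => J m (P m x)) x)
  (HMJ : 0 < MJ) (HMP : 0 < MP)
  (Hiii : forall m, opnorm_le (J m) MJ /\ opnorm_le (P m) MP)
  (* semigroups and generators *)
  (S : R -> X -> X) (DB : X -> Prop) (B : X -> X)
  (HS : generates DB B S)
  (Sm : forall m, R -> Xm m -> Xm m) (DBm : forall m, Xm m -> Prop)
  (Bm : forall m, Xm m -> Xm m)
  (HSm : forall m, generates (DBm m) (Bm m) (Sm m))
  (MS omegaS : R) (HMS : 1 <= MS)
  (HSb : forall h, 0 < h -> opnorm_le (S h) (MS * exp (omegaS * h)))
  (HSmb : forall m h, 0 < h -> opnorm_le (Sm m h) (MS * exp (omegaS * h)))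
  (HBconv : forall x, DB x ->
     (forall m, DBm m (P m x)) /\ seq_lim (fun m => J m (Bm m (P m x))) (B x))
  (t0 : R) (Ht0 : 0 < t0) :
  forall t, 0 < t <= t0 ->
  forall x, DB x ->
    let q := fun (n m : nat) =>
      vscal (/ (t / INR n)) (vsub (J m (Sm m (t / INR n) (P m x))) (J m (P m x))) in
    (* double limit *)
    (forall eps, 0 < eps -> exists N : nat, forall n m,
        (1 <= n)%nat -> (N <= n)%nat -> (N <= m)%nat -> vnorm (vsub (q n m) (B x)) <= eps) /\
    (* the limit as m -> oo is uniform in n *)
    (exists g : nat -> X, forall eps, 0 < eps -> exists N : nat, forall m n,
        (1 <= n)%nat -> (N <= m)%nat -> vnorm (vsub (q n m) (g n)) <= eps).
Proof.
  intros t [Ht _] x Hx q.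
  assert (Htail : forall eps, 0 < eps -> exists K N, forall n m,
            (1 <= n)%nat -> (K <= n)%nat -> (N <= m)%nat -> vnorm (vsub (q n m) (B x)) <= eps)
    by (eapply (difference_quotient_tail X Xm P J MJ MP); eassumption).
  split.
  - intros eps He. destruct (Htail eps He) as [K [N HN]].
    exists (Nat.max K N). intros n m H1 Hn Hm. apply HN; lia.
  -
    exists (fun n => vscal (/ (t / INR n)) (vsub (S (t / INR n) x) x)).
    apply uniform_convergence_from_tail with (l := B x); [| exact Htail |].
    + intros n Hn. eapply (difference_quotient_convergence X Xm P J MJ MP); try eassumption.
      apply Rdiv_lt_0_compat; [lra | apply lt_0_INR; lia].
    + intros eps He. destruct (generator_limit HS x Hx eps He) as [rho [Hrho Hr]].
      destruct (steps_eventually_small t rho Ht Hrho) as [K HK].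
      exists K. intros n H1 Hn. apply Hr, HK; auto.
Qed.
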